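(* Let $\theta,\theta_1>0$ and let $D_n=\lambda^{-1}\sum_{j=0}^{n-1}\big(-N+\sum_{i=1}^MN_i(t_j-h_i)\big)$. Assume that for all $i=1,\dots,M$ and all $0<n\le n_T$, $$\Big|\lambda^{-1}\sum_{j=-n_i}^{0\wedge(n-n_i)}(N_i(t_j)-p_iN)\Big|<\theta_1 .$$ Then $$\mathbb{P}\Big(\sup_{0<n\le n_T}|D_n|\ge M\theta+M\theta_1\Big)\le 2M\exp\Big(-\frac{\theta^2}{32T\epsilon}\Big).$$
   Context: Fix $\epsilon>0$, an integer $N\ge1$, $\lambda:=N/\epsilon$, $t_n:=n\epsilon$, $T>0$ with $n_T:=T\epsilon^{-1}$ an integer. Fix $M\ge1$, positive reals $h_1<\dots<h_M$ each an integer multiple of $\epsilon$, $n_i:=h_i/\epsilon$, and probabilities $p_1,\dots,p_M>0$ summing to $1$. At each time $t_n$ exactly $N$ vertices arrive, each independently of Type $i$ with probability $p_i$; $N_i(t_n)$ is the number of Type $i$ arrivals at $t_n$, so for $n\ge0$ the vectors $(N_1(t_n),\dots,N_M(t_n))$ are independent multinomial$(N;p_1,\dots,p_M)$ (in particular $N_i(t_n)\sim\mathrm{Binomial}(N,p_i)$, $\sum_iN_i(t_n)=N$). For $n<0$ the values $N_i(t_n)$ are given initial data. *)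

From HB Require Import structures.
From mathcomp Require Import all_boot all_order all_algebra.
From mathcomp Require Import reals.
From mathcomp Require Import sequences exp.
Set Implicit Arguments. Unset Strict Implicit. Unset Printing Implicit Defensive.
Import Order.TTheory GRing.Theory Num.Theory.
Local Open Scope ring_scope.

(* Sample space: for each time index j in {0,...,nT-1} and each of the N
   arrivals k at time t_j, the type (in 'I_M, i.e. types 1..M shifted to
   0..M-1) of that arrival.  Only arrivals at times t_0..t_{nT-1} can
   influence D_n for n <= nT. *)
Definition outcome (M N nT : nat) := {ffun 'I_nT -> {ffun 'I_N -> 'I_M}}.

Definition prob_outcome (R : realType) (M N nT : nat) (p : 'I_M -> R)
  (w : outcome M N nT) : R :=
  \prod_(j < nT) \prod_(k < N) p (w j k).

(* N_i(t_n): number of type-i arrivals at time t_n.  For n < 0 it is the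
   given initial data; for 0 <= n < nT it is read off the outcome; times
   n >= nT are never used (value 0). *)
Definition Ncount (M N nT : nat) (init : 'I_M -> int -> nat)
  (w : outcome M N nT) (i : 'I_M) (n : int) : nat :=
  match n with
  | Negz _ => init i n
  | Posz m =>
      match (insub m : option 'I_nT) with
      | Some j => #|[pred k : 'I_N | w j k == i]|
      | None => 0%N
      end
  end.

Definition lam (R : realType) (eps : R) (N : nat) : R := N%:R / eps.

(* D_n = lambda^{-1} sum_{j=0}^{n-1} ( -N + sum_i N_i(t_j - h_i) ),
   with t_j - h_i = t_{j - n_i}. *)
Definition Dn (R : realType) (eps : R) (M N nT : nat) (nn : 'I_M -> nat)
  (init : 'I_M -> int -> nat) (w : outcome M N nT) (n : nat) : R :=
  (lam eps N)^-1 * \sum_(0 <= j < n)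
     (- (N%:R) + \sum_(i < M) (Ncount init w i (j%:Z - (nn i)%:Z))%:R).

(* lambda^{-1} sum_{j=-n_i}^{0 /\ (n - n_i)} (N_i(t_j) - p_i N),
   reindexed by k = j + n_i, k = 0 .. min(n_i, n). *)
Definition initSum (R : realType) (eps : R) (M N nT : nat) (nn : 'I_M -> nat)
  (p : 'I_M -> R) (init : 'I_M -> int -> nat) (w : outcome M N nT)
  (i : 'I_M) (n : nat) : R :=
  (lam eps N)^-1 * \sum_(0 <= k < (minn (nn i) n).+1)
     ((Ncount init w i (k%:Z - (nn i)%:Z))%:R - p i * N%:R).

From HB Require Import structures.
From mathcomp Require Import all_boot all_order all_algebra.
From mathcomp Require Import reals.
From mathcomp Require Import sequences exp.
From mathcomp Require Import ring lra.
Set Implicit Arguments. Unset Strict Implicit. Unset Printing Implicit Defensive.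
Import Order.TTheory GRing.Theory Num.Theory.
Local Open Scope ring_scope.

(* Write D_n = lambda^-1 sum_i sum_(k < n) (N_i(t_(k - n_i)) - p_i N).  For each
   type i, the terms with k < n_i involve the initial data and are controlled by
   the hypothesis up to lambda theta_1 + N; the remaining ones form a random walk
   whose steps are sums of N independent centred indicators.  Hence a large |D_n|
   forces one of 2M signed walks to reach a = lambda theta - N before time n_T.
   The steps have moment generating function at most exp(2 s^2 N), and a
   Chernoff bound for the maximum of a walk, proved by induction on its length,
   bounds each of these 2M events by exp(-a^2 / (8 n_T N)) <= exp(-theta^2 / (32 T eps))
   when theta >= 2 eps; for theta < 2 eps the claimed bound exceeds 1. *)

Lemma ler_sum_union (R : realType) (I J : finType) (P : pred I) (E : J -> pred I)
    (F : I -> R) : (forall i, 0 <= F i) -> (forall i, P i -> exists j, E j i) ->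
  \sum_(i | P i) F i <= \sum_j \sum_(i | E j i) F i.
Proof.
move=> F_ge0 PE.
have -> : \sum_j \sum_(i | E j i) F i = \sum_i \sum_(j | E j i) F i.
  under eq_bigr do rewrite big_mkcond; rewrite exchange_big /=.
  by apply: eq_bigr => i _; rewrite [RHS]big_mkcond.
rewrite [X in _ <= X](bigID P) /= -[X in X <= _]addr0 lerD //; last first.
  by apply: sumr_ge0 => i _; apply: sumr_ge0.
apply: ler_sum => i /PE [j Eji]; rewrite (bigD1 j) //= lerDl.
by apply: sumr_ge0.
Qed.

Lemma exists_ge_mean (R : realType) (I : finType) (x : I -> R) (c : R) :
  (0 < #|I|)%N -> #|I|%:R * c <= \sum_i x i -> exists i, c <= x i.
Proof.
move=> I_gt0 mean_le; have [/existsP //|/existsPn x_lt] := boolP [exists i, c <= x i].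
exfalso; move: mean_le; rewrite leNgt => /negP; apply.
rewrite mulr_natl -sumr_const; apply: ltr_sum => [|i _]; last by rewrite ltNge x_lt.
by case/card_gt0P: I_gt0 => i0 _; apply/hasP; exists i0; rewrite ?mem_index_enum.
Qed.

Lemma norm_prefix_sum_le (R : realType) (f : nat -> R) (b c : R) (r : nat) :
    (0 < r)%N -> 0 <= b -> (forall k, - b <= f k) ->
    (forall m, (0 < m <= r)%N -> `|\sum_(0 <= k < m.+1) f k| < c) ->
  `|\sum_(0 <= k < r) f k| <= c + b.
Proof.
move=> r_gt0 b_ge0 f_ge prefix_lt.
have c_gt0 : 0 < c by apply: le_lt_trans (normr_ge0 _) (prefix_lt r _); rewrite r_gt0 /=.
rewrite ler_norml; apply/andP; split.
  case: r r_gt0 prefix_lt => [|[|r]] // _ prefix_lt.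
    by rewrite big_nat1; have := f_ge 0%N; lra.
  by have := prefix_lt r.+1 (leqnSn _); rewrite ltr_norml => /andP[+ _]; lra.
have := prefix_lt r; rewrite r_gt0 leqnn ltr_norml big_nat_recr //= => /(_ isT).
by case/andP=> _; have := f_ge r; lra.
Qed.

Lemma big_nat_split_minn (R : realType) (F : nat -> R) (m n : nat) :
  \sum_(0 <= k < n) F k = \sum_(0 <= k < minn m n) F k + \sum_(m <= k < n) F k.
Proof.
have [m_le_n|n_lt_m] := leqP m n.
  by rewrite -big_cat_nat.
by rewrite [X in _ + X]big_geq ?addr0 // ltnW.
Qed.

Section IidSequences.
Variables (R : realType) (A : finType) (q : A -> R).
Hypothesis q_ge0 : forall a, 0 <= q a.
Hypothesis q_sum1 : \sum_a q a = 1.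

Definition pweight {K} (w : {ffun 'I_K -> A}) : R := \prod_(j < K) q (w j).

Lemma pweight_ge0 K (w : {ffun 'I_K -> A}) : 0 <= pweight w.
Proof. by apply: prodr_ge0 => j _. Qed.

Lemma sum_pweight K : \sum_(w : {ffun 'I_K -> A}) pweight w = 1.
Proof.
rewrite /pweight -(bigA_distr_bigA (fun (j : 'I_K) (a : A) => q a)) /=.
by rewrite big1 // => j _; rewrite q_sum1.
Qed.

Lemma sum_pweight_le1 K (P : pred {ffun 'I_K -> A}) : \sum_(w | P w) pweight w <= 1.
Proof.
rewrite -(sum_pweight K) [X in _ <= X](bigID P) /= lerDl.
by apply: sumr_ge0 => w _; apply: pweight_ge0.
Qed.

Definition fcons K (b : A) (w : {ffun 'I_K -> A}) : {ffun 'I_K.+1 -> A} :=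
  [ffun j => if unlift ord0 j is Some j' then w j' else b].

Lemma sum_ffunS K (F : {ffun 'I_K.+1 -> A} -> R) :
  \sum_w F w = \sum_b \sum_(w : {ffun 'I_K -> A}) F (fcons b w).
Proof.
rewrite pair_bigA /= (reindex (fun bw : A * {ffun 'I_K -> A} => fcons bw.1 bw.2)) //=.
exists (fun w : {ffun 'I_K.+1 -> A} => (w ord0, [ffun j => w (lift ord0 j)])).
  move=> [b w] _ /=; rewrite /fcons ffunE unlift_none; congr pair.
  by apply/ffunP => j; rewrite !ffunE liftK.
move=> w _; apply/ffunP => j; rewrite /fcons ffunE.
by case: unliftP => [j'|] ->; rewrite ?ffunE.
Qed.

Lemma pweight_fcons K b (w : {ffun 'I_K -> A}) : pweight (fcons b w) = q b * pweight w.
Proof.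
rewrite /pweight big_ord_recl /fcons ffunE unlift_none; congr (_ * _).
by apply: eq_bigr => j _; rewrite ffunE liftK.
Qed.

Definition psum K (D : A -> R) (w : {ffun 'I_K -> A}) (m : nat) : R :=
  \sum_(j < K | (j < m)%N) D (w j).

Lemma psum0 K D (w : {ffun 'I_K -> A}) : psum D w 0 = 0.
Proof. by rewrite /psum big_pred0. Qed.

Lemma psum_fcons K D b (w : {ffun 'I_K -> A}) m :
  psum D (fcons b w) m.+1 = D b + psum D w m.
Proof.
rewrite /psum big_mkcond big_ord_recl /= /fcons ffunE unlift_none.
congr (_ + _); rewrite [RHS]big_mkcond; apply: eq_bigr => j _.
by rewrite ffunE liftK.
Qed.

Lemma psumZ K (c : R) D (w : {ffun 'I_K -> A}) m :
  psum (fun a => c * D a) w m = c * psum D w m.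
Proof. by rewrite /psum mulr_sumr. Qed.

Lemma psum_le K (c : R) D (w : {ffun 'I_K -> A}) m :
  0 <= c -> (forall a, D a <= c) -> psum D w m <= K%:R * c.
Proof.
move=> c_ge0 D_le; apply: le_trans (ler_sum _ (fun j _ => D_le (w j))) _.
have -> : K%:R * c = \sum_(j < K) c by rewrite sumr_const card_ord mulr_natl.
by rewrite [X in _ <= X](bigID (fun j : 'I_K => (j < m)%N)) /= lerDl sumr_ge0.
Qed.

Lemma exists_psum_fcons K D b (w : {ffun 'I_K -> A}) (a : R) : 0 < a ->
  [exists m : 'I_K.+2, a <= psum D (fcons b w) m] =
  [exists m : 'I_K.+1, a - D b <= psum D w m].
Proof.
move=> a_gt0; apply/existsP/existsP => -[[[|m] lt_m] le_a].
- by move: le_a; rewrite psum0 leNgt a_gt0.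
- by exists (Ordinal (lt_m : (m < K.+1)%N)); rewrite lerBlDl -psum_fcons.
- by exists (Ordinal (lt_m : (1 < K.+2)%N)); rewrite psum_fcons -lerBlDl.
- by exists (Ordinal (lt_m : (m.+2 < K.+2)%N)); rewrite psum_fcons -lerBlDl.
Qed.

(* Induction on K: conditioning on the first step b turns the event for K.+1
   steps into the event for K steps with threshold a - D b. *)
Lemma psum_max_chernoff (D : A -> R) (s phi : R) :
    0 <= s -> 1 <= phi -> \sum_a q a * expR (s * D a) <= phi ->
  forall K (a : R),
  \sum_(w : {ffun 'I_K -> A} | [exists m : 'I_K.+1, a <= psum D w m]) pweight w
    <= expR (- (s * a)) * phi ^+ K.
Proof.
move=> s_ge0 phi_ge1 mgf_le.
have small_a K a : a <= 0 ->
    \sum_(w : {ffun 'I_K -> A} | [exists m : 'I_K.+1, a <= psum D w m]) pweight w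
      <= expR (- (s * a)) * phi ^+ K.
  move=> a_le0; apply: le_trans (sum_pweight_le1 _) _.
  apply: mulr_ege1; last exact: exprn_ege1.
  by rewrite -expR0 ler_expR oppr_ge0 mulr_ge0_le0.
elim=> [|K IH] a; have [a_le0|a_gt0] := lerP a 0; try exact: small_a.
  rewrite big_pred0 ?mulr_ge0 ?expR_ge0 // => w.
  by apply/existsP => -[m]; rewrite ord1 psum0 leNgt a_gt0.
rewrite big_mkcond sum_ffunS /=.
apply: (@le_trans _ _ (\sum_b q b * (expR (- (s * (a - D b))) * phi ^+ K))).
  apply: ler_sum => b _.
  have -> : \sum_(w : {ffun 'I_K -> A}) (if [exists m : 'I_K.+2, a <= psum D (fcons b w) m]
                     then pweight (fcons b w) else 0) =
      q b * \sum_(w : {ffun 'I_K -> A} | [exists m : 'I_K.+1, a - D b <= psum D w m]) pweight w.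
    rewrite mulr_sumr [RHS]big_mkcond; apply: eq_bigr => w _.
    by rewrite exists_psum_fcons // pweight_fcons; case: ifP; rewrite ?mulr0.
  by apply: ler_wpM2l; [exact: q_ge0 | exact: IH].
have -> : \sum_b q b * (expR (- (s * (a - D b))) * phi ^+ K) =
          expR (- (s * a)) * phi ^+ K * \sum_b q b * expR (s * D b).
  rewrite mulr_sumr; apply: eq_bigr => b _.
  by rewrite mulrBr opprB addrC expRD; ring.
rewrite exprSr mulrA; apply: ler_wpM2l => //.
by rewrite mulr_ge0 ?expR_ge0 // exprn_ge0 // (le_trans ler01).
Qed.
End IidSequences.

Lemma expR_le_quad (R : realType) (x : R) : x <= 1/2 -> expR x <= 1 + x + 2 * x ^+ 2.
Proof.
move=> x_le; have e_gt0 := expR_gt0 x.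
have : expR x * (1 - x) <= 1.
  rewrite -[X in _ <= X](expR0 R) -(subrr x) expRD.
  by apply: ler_wpM2l; [exact: ltW | exact: expR_ge1Dx].
nra.
Qed.

Section CenteredSteps.
Variables (R : realType) (A : finType) (q : A -> R) (Y : A -> R).
Hypothesis q_ge0 : forall a, 0 <= q a.
Hypothesis q_sum1 : \sum_a q a = 1.
Hypothesis Y_le1 : forall a, `|Y a| <= 1.
Hypothesis Y_centered : \sum_a q a * Y a = 0.

Lemma mgf_centered_le (s : R) : `|s| <= 1/2 ->
  \sum_a q a * expR (s * Y a) <= expR (2 * s ^+ 2).
Proof.
move=> s_le; apply: (@le_trans _ _ (\sum_a q a * (1 + s * Y a + 2 * s ^+ 2))).
  apply: ler_sum => a _; apply: ler_wpM2l => //.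
  have sY_le : `|s * Y a| <= `|s| by rewrite normrM ler_piMr.
  apply: le_trans (expR_le_quad _) _.
    by apply: le_trans (ler_norm _) (le_trans sY_le s_le).
  rewrite lerD2l ler_pM2l // -(real_normK (num_real (s * Y a))).
  by rewrite -(real_normK (num_real s)) ler_sqr ?nnegrE.
have -> : \sum_a q a * (1 + s * Y a + 2 * s ^+ 2) =
          \sum_a q a + s * \sum_a q a * Y a + 2 * s ^+ 2 * \sum_a q a.
  rewrite !mulr_sumr -!big_split /=; apply: eq_bigr => a _; ring.
by rewrite q_sum1 Y_centered mulr0 addr0 mulr1 expR_ge1Dx.
Qed.

Lemma mgf_sum_centered_le N (s : R) : `|s| <= 1/2 ->
  \sum_(b : {ffun 'I_N -> A}) pweight q b * expR (s * \sum_k Y (b k))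
    <= expR (2 * s ^+ 2 * N%:R).
Proof.
move=> s_le.
have -> : \sum_(b : {ffun 'I_N -> A}) pweight q b * expR (s * \sum_k Y (b k)) =
          \prod_(k < N) \sum_a q a * expR (s * Y a).
  rewrite (bigA_distr_bigA (fun (k : 'I_N) a => q a * expR (s * Y a))) /=.
  by apply: eq_bigr => b _; rewrite mulr_sumr expR_sum -big_split.
rewrite expRM_natr -[N in _ ^+ N]card_ord -prodr_const.
apply: ler_prod => k _; rewrite mgf_centered_le // andbT.
by apply: sumr_ge0 => a _; rewrite mulr_ge0 ?expR_ge0.
Qed.

Lemma psum_max_tail N K (a : R) : 0 < a ->
  \sum_(w : {ffun 'I_K -> {ffun 'I_N -> A}} |
        [exists m : 'I_K.+1, a <= psum (fun b : {ffun 'I_N -> A} => \sum_k Y (b k)) w m])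
    pweight (pweight q) w <= expR (- (a ^+ 2 / (8 * (K%:R * N%:R)))).
Proof.
move=> a_gt0; set step := fun b : {ffun 'I_N -> A} => \sum_k Y (b k).
have step_le b : step b <= N%:R.
  rewrite -[N in N%:R]card_ord -sumr_const; apply: ler_sum => k _.
  exact: le_trans (ler_norm _) (Y_le1 _).
have [KN_lt_a|a_le_KN] := ltrP (K%:R * N%:R) a.
  rewrite big_pred0 ?expR_ge0 // => w; apply/existsP => -[m]; apply/negP.
  by rewrite -ltNge (le_lt_trans (psum_le w m (ler0n _ N) step_le)).
have KN_gt0 : 0 < K%:R * N%:R := lt_le_trans a_gt0 a_le_KN.
pose s := a / (4 * (K%:R * N%:R)).
have s_gt0 : 0 < s by rewrite divr_gt0 //; lra.
have s_le : `|s| <= 1/2.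
  by rewrite gtr0_norm // ler_pdivrMr; lra.
have phi_ge1 : 1 <= expR (2 * s ^+ 2 * N%:R).
  have sN_ge0 := mulr_ge0 (sqr_ge0 s) (ler0n R N).
  by rewrite -[X in X <= _]expR0 ler_expR -mulrA; lra.
apply: le_trans (psum_max_chernoff (fun b => pweight_ge0 q_ge0 b)
  (sum_pweight q_sum1 N) (ltW s_gt0) phi_ge1 (mgf_sum_centered_le N s_le) K a) _.
rewrite -expRM_natr -expRD ler_expR le_eqVlt; apply/orP; left; apply/eqP.
by rewrite /s; field; rewrite andbC -negb_or -mulf_eq0 lt0r_neq0.
Qed.
End CenteredSteps.

Section ArrivalModel.
Variables (R : realType) (eps : R) (M N nT : nat) (nn : 'I_M -> nat)
  (p : 'I_M -> R) (init : 'I_M -> int -> nat).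
Hypothesis eps_gt0 : 0 < eps.
Hypothesis N_gt0 : (0 < N)%N.
Hypothesis nn_gt0 : forall i, (0 < nn i)%N.
Hypothesis p_gt0 : forall i, 0 < p i.
Hypothesis p_sum1 : \sum_i p i = 1.

Lemma p_le1 i : p i <= 1.
Proof.
by rewrite -p_sum1 (bigD1 i) //= lerDl sumr_ge0 // => j _; apply: ltW.
Qed.

Lemma lam_gt0 : 0 < lam eps N.
Proof. by rewrite divr_gt0 ?ltr0n. Qed.

Definition centered_count (w : outcome M N nT) (i : 'I_M) (k : nat) : R :=
  (Ncount init w i (k%:Z - (nn i)%:Z))%:R - p i * N%:R.

Lemma DnE w n : Dn eps nn init w n =
  (lam eps N)^-1 * \sum_i \sum_(0 <= k < n) centered_count w i k.
Proof.
rewrite /Dn exchange_big; congr (_ * _); apply: eq_bigr => k _.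
by rewrite /centered_count sumrB -mulr_suml p_sum1 mul1r addrC.
Qed.

Lemma initSumE w i n : initSum eps nn p init w i n =
  (lam eps N)^-1 * \sum_(0 <= k < (minn (nn i) n).+1) centered_count w i k.
Proof. by []. Qed.

Lemma centered_count_ge w i k : - N%:R <= centered_count w i k.
Proof.
have := p_le1 i; have := ler0n R N.
have := ler0n R (Ncount init w i (k%:Z - (nn i)%:Z)).
rewrite /centered_count; nra.
Qed.

(* The sign sg selects the walk of N_i - p_i N or of its negative, so that
   |walk| >= a is covered by one-sided events. *)
Definition type_step (i : 'I_M) (sg : bool) (c : 'I_M) : R :=
  (-1) ^+ sg * ((c == i)%:R - p i).

Definition type_walk i sg (w : outcome M N nT) (m : nat) : R :=
  psum (fun b : {ffun 'I_N -> 'I_M} => \sum_k type_step i sg (b k)) w m.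

Lemma type_step_le1 i sg c : `|type_step i sg c| <= 1.
Proof.
rewrite normrM normrX normrN1 expr1n mul1r ler_norml.
by have := p_gt0 i; have := p_le1 i; case: (c == i) => /=; lra.
Qed.

Lemma type_step_centered i sg : \sum_c p c * type_step i sg c = 0.
Proof.
have pick_i : \sum_c p c * (c == i)%:R = p i.
  by rewrite (bigD1 i) //= eqxx mulr1 big1 ?addr0 // => c /negbTE ->; rewrite mulr0.
under eq_bigr do rewrite mulrCA mulrBr.
by rewrite -mulr_sumr sumrB -mulr_suml p_sum1 mul1r pick_i subrr mulr0.
Qed.

Lemma type_walkN i sg w m : type_walk i sg w m = (-1) ^+ sg * type_walk i false w m.
Proof.
rewrite /type_walk -psumZ /psum; apply: eq_bigr => j _.
by rewrite mulr_sumr; apply: eq_bigr => k _; rewrite /type_step expr0 mul1r.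
Qed.

Lemma centered_count_shift w i (j : 'I_nT) :
  centered_count w i (j + nn i) = \sum_k type_step i false (w j k).
Proof.
rewrite /centered_count /type_step PoszD addrK /Ncount valK.
under eq_bigr do rewrite expr0 mul1r.
rewrite sumrB sumr_const card_ord mulr_natr -sum1_card natr_sum big_mkcond /=.
by congr (_ - _); apply: eq_bigr => k _; rewrite inE; case: (w j k == i).
Qed.

Lemma sum_centered_count_tail w i n : (n <= nT)%N ->
  \sum_(nn i <= k < n) centered_count w i k = type_walk i false w (n - nn i).
Proof.
move=> n_le; rewrite -{1}(add0n (nn i)) big_addn big_mkord.
rewrite (big_ord_widen nT (fun k => centered_count w i (k + nn i))); last first.
  exact: leq_trans (leq_subr _ _) n_le.
by apply: eq_bigr => j _; rewrite centered_count_shift.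
Qed.

Lemma norm_sum_centered_count_le w i n (theta1 : R) : (0 < n <= nT)%N ->
    (forall m, (0 < m <= nT)%N -> `|initSum eps nn p init w i m| < theta1) ->
  `|\sum_(0 <= k < n) centered_count w i k|
    <= lam eps N * theta1 + N%:R + `|type_walk i false w (n - nn i)|.
Proof.
move=> /andP[n_gt0 n_le] init_small.
rewrite (big_nat_split_minn _ (nn i)) sum_centered_count_tail //.
apply: le_trans (ler_normD _ _) _; rewrite lerD2r.
apply: norm_prefix_sum_le => [||k|m /andP[m_gt0 m_le]].
- by rewrite leq_min nn_gt0.
- exact: ler0n.
- exact: centered_count_ge.
have m_le_nn : (m <= nn i)%N by apply: leq_trans m_le (geq_minl _ _).
have := init_small m; rewrite m_gt0 (leq_trans m_le (leq_trans (geq_minr _ _) n_le)).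
rewrite initSumE (minn_idPr m_le_nn) normrM normfV (gtr0_norm lam_gt0).
by rewrite ltr_pdivrMl ?lam_gt0 //; apply.
Qed.

Lemma large_Dn_type_walk w n (theta theta1 : R) : (0 < M)%N -> (0 < n <= nT)%N ->
    (forall i m, (0 < m <= nT)%N -> `|initSum eps nn p init w i m| < theta1) ->
    M%:R * theta + M%:R * theta1 <= `|Dn eps nn init w n| ->
  exists i, lam eps N * theta - N%:R <= `|type_walk i false w (n - nn i)|.
Proof.
move=> M_gt0 n_bounds init_small Dn_large.
have [i le_i] : exists i : 'I_M, lam eps N * theta1 + N%:R + (lam eps N * theta - N%:R)
    <= lam eps N * theta1 + N%:R + `|type_walk i false w (n - nn i)|.
  apply: exists_ge_mean; first by rewrite card_ord.
  apply: le_trans (ler_sum _ (fun i _ => norm_sum_centered_count_le n_bounds (init_small i))).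
  apply: le_trans (ler_norm_sum _ _ _).
  move: Dn_large; rewrite DnE normrM normfV (gtr0_norm lam_gt0).
  rewrite ler_pdivlMl ?lam_gt0 // card_ord; apply: le_trans; lra.
by exists i; move: le_i; rewrite lerD2l.
Qed.

Lemma large_Dn_signed_walk w n (theta theta1 : R) : (0 < M)%N -> (0 < n <= nT)%N ->
    (forall i m, (0 < m <= nT)%N -> `|initSum eps nn p init w i m| < theta1) ->
    M%:R * theta + M%:R * theta1 <= `|Dn eps nn init w n| ->
  exists ig : 'I_M * bool,
    [exists m : 'I_nT.+1, lam eps N * theta - N%:R <= type_walk ig.1 ig.2 w m].
Proof.
move=> M_gt0 n_bounds init_small Dn_large.
have [i] := large_Dn_type_walk M_gt0 n_bounds init_small Dn_large.
have m_lt : (n - nn i < nT.+1)%N.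
  by rewrite ltnS (leq_trans (leq_subr _ _)) //; case/andP: n_bounds.
rewrite ler_normr => /orP[walk_large|walk_large];
  [exists (i, false) | exists (i, true)]; apply/existsP; exists (Ordinal m_lt) => //=.
by rewrite type_walkN expr1 mulN1r.
Qed.

End ArrivalModel.

Lemma tail_exponent_le (R : realType) (eps theta : R) (N nT : nat) :
    0 < eps -> (0 < N)%N -> (0 < nT)%N -> 2 * eps <= theta ->
  expR (- ((lam eps N * theta - N%:R) ^+ 2 / (8 * (nT%:R * N%:R))))
    <= expR (- theta ^+ 2 / (32 * (nT%:R * eps) * eps)).
Proof.
move=> eps_gt0 N_gt0 nT_gt0 theta_ge.
have N_ge1 : 1 <= N%:R :> R by rewrite ler1n.
have nT_gt0' : 0 < nT%:R :> R by rewrite ltr0n.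
set u := theta / eps.
have u_ge2 : 2 <= u by rewrite ler_pdivlMr.
have -> : (lam eps N * theta - N%:R) ^+ 2 / (8 * (nT%:R * N%:R)) =
          (4 * N%:R * (u - 1) ^+ 2) / (32 * nT%:R).
  by rewrite /lam /u; field; rewrite ?lt0r_neq0 ?ltr0n.
have -> : - theta ^+ 2 / (32 * (nT%:R * eps) * eps) = - (u ^+ 2 / (32 * nT%:R)).
  by rewrite /u; field; rewrite ?lt0r_neq0 ?ltr0n.
rewrite ler_expR lerN2 ler_pM2r ?invr_gt0 ?mulr_gt0 //.
have : u ^+ 2 <= (2 * (u - 1)) ^+ 2 by rewrite ler_sqr ?nnegrE; lra.
have : 0 <= (u - 1) ^+ 2 := sqr_ge0 _.
nra.
Qed.

Lemma threshold_gt0 (R : realType) (eps theta : R) (N : nat) :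
  0 < eps -> (0 < N)%N -> 2 * eps <= theta -> 0 < lam eps N * theta - N%:R.
Proof.
move=> eps_gt0 N_gt0 theta_ge.
have -> : lam eps N * theta - N%:R = N%:R * (theta / eps - 1).
  by rewrite /lam; field; exact: lt0r_neq0.
by rewrite mulr_gt0 ?ltr0n // subr_gt0 ltr_pdivlMr // mul1r; lra.
Qed.

Lemma small_theta_bound (R : realType) (eps theta : R) (M nT : nat) :
    0 < eps -> (0 < M)%N -> (0 < nT)%N -> 0 < theta -> theta < 2 * eps ->
  1 <= 2 * M%:R * expR (- theta ^+ 2 / (32 * (nT%:R * eps) * eps)).
Proof.
move=> eps_gt0 M_gt0 nT_gt0 theta_gt0 theta_lt.
have M_ge1 : 1 <= M%:R :> R by rewrite ler1n.
have nT_ge1 : 1 <= nT%:R :> R by rewrite ler1n.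
have x_le : theta ^+ 2 / (32 * (nT%:R * eps) * eps) <= 1/8.
  rewrite ler_pdivrMr; last by rewrite !mulr_gt0 // ltr0n.
  nra.
have := expR_ge1Dx (- theta ^+ 2 / (32 * (nT%:R * eps) * eps)).
rewrite mulNr; nra.
Qed.

Lemma prob_outcomeE (R : realType) (M N nT : nat) (p : 'I_M -> R) (w : outcome M N nT) :
  prob_outcome p w = pweight (pweight p) w.
Proof. by []. Qed.

Theorem lemma8p2 (R : realType) (eps : R) (N M nT : nat) (nn : 'I_M -> nat)
  (p : 'I_M -> R) (init : 'I_M -> int -> nat) (theta theta1 : R) :
  0 < eps -> (0 < N)%N -> (0 < M)%N -> (0 < nT)%N ->
  (forall i, (0 < nn i)%N) ->
  (forall i j : 'I_M, (i < j)%N -> (nn i < nn j)%N) ->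
  (forall i, 0 < p i) -> \sum_(i < M) p i = 1 ->
  0 < theta -> 0 < theta1 ->
  (forall (w : outcome M N nT) (i : 'I_M) (n : nat), (0 < n <= nT)%N ->
      `| initSum eps nn p init w i n | < theta1) ->
  \sum_(w : outcome M N nT |
          [exists n : 'I_nT.+1,
             (0 < (n : nat))%N &&
             (M%:R * theta + M%:R * theta1 <= `| Dn eps nn init w n |)])
     prob_outcome p w
  <= 2 * M%:R * expR (- (theta ^+ 2) / (32 * (nT%:R * eps) * eps)).
Proof.
move=> eps_gt0 N_gt0 M_gt0 nT_gt0 nn_gt0 _ p_gt0 p_sum1 theta_gt0 _ init_small.
have p_ge0 i : 0 <= p i by apply: ltW.
have step_ge0 (b : {ffun 'I_N -> 'I_M}) : 0 <= pweight p b := pweight_ge0 p_ge0 b.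
have step_sum1 := sum_pweight p_sum1 N.
under eq_bigr do rewrite prob_outcomeE.
have [theta_lt|theta_ge] := ltrP theta (2 * eps).
  apply: le_trans (sum_pweight_le1 step_ge0 step_sum1 _) _.
  exact: small_theta_bound.
pose a := lam eps N * theta - N%:R.
have a_gt0 : 0 < a by apply: threshold_gt0.
pose E (ig : 'I_M * bool) (w : outcome M N nT) :=
  [exists m : 'I_nT.+1, a <= type_walk p ig.1 ig.2 w m].
apply: le_trans (ler_sum_union (E := E) (fun w => pweight_ge0 step_ge0 w) _) _.
  move=> w /existsP[n /andP[n_gt0 Dn_large]].
  have n_bounds : (0 < n <= nT)%N by rewrite n_gt0 -ltnS ltn_ord.
  have [ig walk_large] := large_Dn_signed_walk eps_gt0 N_gt0 nn_gt0 p_gt0 p_sum1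
    M_gt0 n_bounds (init_small w) Dn_large.
  by exists ig.
have tail ig := psum_max_tail p_ge0 p_sum1
  (type_step_le1 p_gt0 p_sum1 ig.1 ig.2) (type_step_centered p_sum1 ig.1 ig.2) N nT a_gt0.
apply: le_trans (ler_sum _ (fun ig _ => tail ig)) _.
rewrite sumr_const card_prod card_ord card_bool -[_ *+ (M * 2)]mulr_natl natrM [M%:R * _]mulrC.
by apply: ler_wpM2l; [rewrite mulr_ge0 ?ler0n | exact: tail_exponent_le].
Qed.
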